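(* Let $m\ge 3$ and let $C_1,\dots,C_m\subset\mathbb{R}^n$ be nonempty, closed, convex sets in general position, $C=C_1\times\cdots\times C_m$, and $D(x)=\sum_{i=1}^m\|x_i-x_{i+1}\|$ with $x_{m+1}=x_1$. Then $$\inf_{x\in C}D(x)=\inf\{D(x_1,\dots,x_m): x_i\in\operatorname{bd}(C_i),\ 1\le i\le m\},$$ and every minimizer $x^*=(x_1^*,\dots,x_m^* )$ of $D$ over $C$ satisfies $x_i^*\in\operatorname{bd}(C_i)$ for all $i$.
   Context: The family $C_1,\dots,C_m$ is in general position if for every $i$, $C_i\cap\operatorname{conv}\big(\bigcup_{j\ne i}C_j\big)=\varnothing$. $\operatorname{bd}$ denotes the boundary in $\mathbb{R}^n$. *)

From HB Require Import structures.
From mathcomp Require Import all_boot all_order all_algebra.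
From mathcomp Require Import all_classical all_reals all_analysis.
Set Implicit Arguments. Unset Strict Implicit. Unset Printing Implicit Defensive.
Import Order.TTheory GRing.Theory Num.Theory.
Import numFieldTopology.Exports numFieldNormedType.Exports.
Local Open Scope classical_set_scope.
Local Open Scope ring_scope.

Section Defs.
Variables (R : realType) (n : nat).

Definition eucl_norm (v : 'rV[R]_n) : R := Num.sqrt (\sum_(i < n) (v ord0 i) ^+ 2).

Definition convex (A : set 'rV[R]_n) : Prop :=
  forall x y (t : R), A x -> A y -> 0 <= t -> t <= 1 -> A ((1 - t) *: x + t *: y).

Definition conv (S : set 'rV[R]_n) : set 'rV[R]_n :=
  [set y | exists (k : nat) (l : 'I_k -> R) (p : 'I_k -> 'rV[R]_n),
     [/\ (forall j, 0 <= l j), \sum_(j < k) l j = 1, (forall j, S (p j))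
       & y = \sum_(j < k) l j *: p j]].

Definition bd (A : set 'rV[R]_n) : set 'rV[R]_n := closure A `\` interior A.

Variable m : nat.

Definition general_position (C : 'I_m -> set 'rV[R]_n) : Prop :=
  forall i, C i `&` conv (\bigcup_(j in [set j | j != i]) C j) = set0.

Definition prodset (C : 'I_m -> set 'rV[R]_n) : set ('I_m -> 'rV[R]_n) :=
  [set x | forall i, C i (x i)].

Definition cycD (x : 'I_m -> 'rV[R]_n) : R :=
  \sum_(i < m) eucl_norm (x i - x (ordS i)).

End Defs.

(* Moving a vertex x_i of the polygon along the segment towards its neighbour
   x_(i-1) never lengthens the two edges at x_i, since the length of the path
   x_(i-1) -> p -> x_(i+1) is a convex function of p along the segment.  By
   general position x_(i-1) lies outside the closed set C_i, so the segment
   crosses the boundary of C_i; doing this at every vertex produces a boundary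
   configuration which is no longer, whence the equality of the infima.  If a
   minimizer had x_i in the interior of C_i, a small move of this kind would be
   admissible, and minimality would force
   |x_(i-1) - x_i| + |x_i - x_(i+1)| = |x_(i-1) - x_(i+1)|: then x_i lies on the
   segment [x_(i-1), x_(i+1)], i.e. in the convex hull of the other sets,
   contradicting general position. *)
From Pilot Require Import Defs.
From HB Require Import structures.
From mathcomp Require Import all_boot all_order all_algebra.
From mathcomp Require Import all_classical all_reals all_analysis.
From mathcomp Require Import ring lra zify.
Import Order.TTheory GRing.Theory Num.Theory.
Import numFieldTopology.Exports numFieldNormedType.Exports.
Local Open Scope classical_set_scope.
Local Open Scope ring_scope.
Set Implicit Arguments. Unset Strict Implicit.

Section EuclideanNorm.
Variables (R : realType) (n : nat).
Implicit Types (u v w : 'rV[R]_n) (a b : R).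

Definition dot u v : R := \sum_(i < n) u ord0 i * v ord0 i.

Lemma dotC u v : dot u v = dot v u.
Proof. by apply: eq_bigr => i _; rewrite mulrC. Qed.

Lemma dotDZl a b u v w : dot (a *: u + b *: v) w = a * dot u w + b * dot v w.
Proof.
rewrite /dot !mulr_sumr -big_split /=.
by apply: eq_bigr => i _; rewrite !mxE; ring.
Qed.

Lemma dotDZr a b u v w : dot w (a *: u + b *: v) = a * dot w u + b * dot w v.
Proof. by rewrite dotC dotDZl (dotC u) (dotC v). Qed.

Lemma dotDD u v : dot (u + v) (u + v) = dot u u + 2 * dot u v + dot v v.
Proof.
rewrite /dot mulr_sumr -!big_split /=.
by apply: eq_bigr => i _; rewrite !mxE; ring.
Qed.

Lemma dot_ge0 u : 0 <= dot u u.
Proof. by apply: sumr_ge0 => i _; rewrite -expr2 sqr_ge0. Qed.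

Lemma dot_eq0 u : dot u u = 0 -> u = 0.
Proof.
move=> /psumr_eq0P u0; apply/rowP => i; rewrite mxE.
have /eqP : u ord0 i * u ord0 i = 0.
  by apply: u0 => // j _; rewrite -expr2 sqr_ge0.
by rewrite mulf_eq0 orbb => /eqP.
Qed.

Lemma dot_sqr_le u v : dot u v ^+ 2 <= dot u u * dot v v.
Proof.
have [vv0|vv0] := eqVneq (dot v v) 0.
  have -> : dot u v = 0.
    by rewrite (dot_eq0 vv0) /dot big1 // => i _; rewrite mxE mulr0.
  by rewrite vv0 expr0n mulr0.
have vv_gt0 : 0 < dot v v by rewrite lt_neqAle eq_sym vv0 dot_ge0.
have := dot_ge0 (dot v v *: u + (- dot u v) *: v).
rewrite dotDZl !dotDZr (dotC v u).
have -> : dot v v * (dot v v * dot u u + - dot u v * dot u v) +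
    - dot u v * (dot v v * dot u v + - dot u v * dot v v)
   = dot v v * (dot u u * dot v v - dot u v ^+ 2) by ring.
by rewrite pmulr_rge0 // subr_ge0.
Qed.

Lemma eucl_normE u : eucl_norm u = Num.sqrt (dot u u).
Proof. by congr Num.sqrt; apply: eq_bigr => i _; rewrite expr2. Qed.

Lemma eucl_norm_ge0 u : 0 <= eucl_norm u.
Proof. by rewrite sqrtr_ge0. Qed.

Lemma eucl_norm_sqr u : eucl_norm u ^+ 2 = dot u u.
Proof. by rewrite eucl_normE sqr_sqrtr // dot_ge0. Qed.

Lemma eucl_norm_eq0 u : eucl_norm u = 0 -> u = 0.
Proof.
rewrite eucl_normE => /eqP; rewrite sqrtr_eq0 => u_le0; apply: dot_eq0.
by apply/eqP; rewrite eq_le u_le0 dot_ge0.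
Qed.

Lemma dot_le_eucl_norm u v : dot u v <= eucl_norm u * eucl_norm v.
Proof.
rewrite !eucl_normE -sqrtrM ?dot_ge0 // (le_trans (ler_norm _)) //.
by rewrite -sqrtr_sqr ler_sqrt ?dot_sqr_le // mulr_ge0 ?dot_ge0.
Qed.

Lemma eucl_normD u v : eucl_norm (u + v) <= eucl_norm u + eucl_norm v.
Proof.
rewrite -(ger0_norm (addr_ge0 (eucl_norm_ge0 u) (eucl_norm_ge0 v))) -sqrtr_sqr.
rewrite eucl_normE ler_sqrt ?sqr_ge0 // dotDD sqrrD !eucl_norm_sqr -mulr_natl.
by have := dot_le_eucl_norm u v; lra.
Qed.

Lemma eucl_normD_eq u v : eucl_norm (u + v) = eucl_norm u + eucl_norm v ->
  eucl_norm v *: u = eucl_norm u *: v.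
Proof.
move=> /(congr1 (fun r => r ^+ 2)); rewrite /= eucl_norm_sqr dotDD sqrrD.
rewrite !eucl_norm_sqr -mulr_natl => h.
have uv : dot u v = eucl_norm u * eucl_norm v by lra.
apply/eqP; rewrite -subr_eq0; apply/eqP; apply: dot_eq0.
by rewrite -scaleNr dotDZl !dotDZr (dotC v u) uv -!eucl_norm_sqr; ring.
Qed.

Lemma eucl_normZ a u : eucl_norm (a *: u) = `|a| * eucl_norm u.
Proof.
rewrite !eucl_normE -[a *: u]addr0 -(scale0r u) dotDZl !dotDZr.
by rewrite !mul0r !addr0 mulrA -expr2 sqrtrM ?sqr_ge0 // sqrtr_sqr.
Qed.

End EuclideanNorm.

Section Segment.
Variables (R : realType) (n : nat).
Local Notation V := 'rV[R]_n.
Implicit Types (a b z : V) (t : R).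

Definition towards z a t : V := z + t *: (a - z).

Definition detour a z b : R := eucl_norm (a - z) + eucl_norm (z - b).

Lemma towards0 z a : towards z a 0 = z.
Proof. by rewrite /towards scale0r addr0. Qed.

Lemma towards1 z a : towards z a 1 = a.
Proof. by rewrite /towards scale1r addrC subrK. Qed.

Lemma towards_continuous z a : continuous (towards z a).
Proof.
move=> t.
change {for t, continuous ((fun=> z) + (fun s => s *: (a - z)))}.
by apply: continuousD; [exact: cst_continuous | exact: scalel_continuous].
Qed.

Lemma detour_ge a z b : eucl_norm (a - b) <= detour a z b.
Proof. by have := eucl_normD (a - z) (z - b); rewrite addrA subrK. Qed.

Lemma detour_towards_convex a z b t : 0 <= t <= 1 ->
  detour a (towards z a t) b <= (1 - t) * detour a z b + t * eucl_norm (a - b).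
Proof.
move=> /andP[t_ge0 t_le1]; rewrite /detour.
have -> : a - towards z a t = (1 - t) *: (a - z).
  by apply/rowP => j; rewrite !mxE; ring.
have -> : towards z a t - b = (1 - t) *: (z - b) + t *: (a - b).
  by apply/rowP => j; rewrite !mxE; ring.
have := eucl_normD ((1 - t) *: (z - b)) (t *: (a - b)).
by rewrite !eucl_normZ !ger0_norm ?subr_ge0 //; lra.
Qed.

Lemma detour_towards_le a z b t : 0 <= t <= 1 ->
  detour a (towards z a t) b <= detour a z b.
Proof.
move=> t01; have := detour_towards_convex a z b t01; have := detour_ge a z b.
by case/andP: t01; nra.
Qed.

Lemma closed_bd_sub (A : set V) : closed A -> bd A `<=` A.
Proof. by move=> /(closure_id A).1 clA w /= [+ _]; rewrite -clA. Qed.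

Lemma towards_interior (A : set V) z a : interior A z ->
  exists2 t, 0 < t <= 1 & A (towards z a t).
Proof.
rewrite -{1}(towards0 z a) => /towards_continuous /nbhs_ballP[e /= e_gt0 He].
pose t := Num.min (e / 2) 1.
have t_gt0 : 0 < t by rewrite lt_min divr_gt0 // ltr01.
have t_le : t <= e / 2 /\ t <= 1 by split; rewrite ge_min lexx ?orbT.
exists t; first by rewrite t_gt0 (proj2 t_le).
by apply: He; rewrite /ball /= sub0r normrN ger0_norm; lra.
Qed.

(* The crossing point is towards z a s for s the supremum of the times at
   which the segment is still in A. *)
Lemma towards_bd (A : set V) z a : closed A -> A z -> ~ A a ->
  exists2 t, 0 <= t <= 1 & bd A (towards z a t).
Proof.
move=> A_closed Az Aa.
pose T := ([set t : R | 0 <= t] `&` [set t | t <= 1]) `&` (towards z a @^-1` A).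
have T_closed : closed T.
  apply: closedI; first by apply: closedI; [exact: closed_ge | exact: closed_le].
  by apply: preimage_closed => // t _; exact: towards_continuous.
have T0 : T 0 by split; [split => /=; lra | rewrite /= towards0].
have T_ub : ubound T 1 by move=> t [[_ ?] _].
have Ts : T (sup T).
  have := closure_sup (ex_intro _ 0 T0) (ex_intro _ 1 T_ub).
  by rewrite -((closure_id T).1 T_closed).
case: (Ts) => [[/= s_ge0 s_le1] As].
exists (sup T); first by rewrite s_ge0 s_le1.
split; first exact: subset_closure.
move=> /towards_continuous /nbhs_ballP[e /= e_gt0 He].
have s_lt1 : sup T < 1.
  rewrite lt_neqAle s_le1 andbT; apply/eqP => s1.
  by apply: Aa; rewrite -(towards1 z a) -s1.
pose d := Num.min (e / 2) (1 - sup T).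
have d_gt0 : 0 < d by rewrite lt_min divr_gt0 // subr_gt0 s_lt1.
have d_le : d <= e / 2 /\ d <= 1 - sup T by split; rewrite ge_min lexx ?orbT.
have Td : T (sup T + d).
  split; first by split => /=; lra.
  apply: He; rewrite /ball /= opprD addrA subrr add0r normrN ger0_norm; lra.
have := sup_upper_bound (conj (ex_intro _ 0 T0) (ex_intro _ 1 T_ub)) Td.
lra.
Qed.

Lemma conv_mem (S : set V) a : S a -> Defs.conv S a.
Proof.
move=> Sa; exists 1%N, (fun=> 1), (fun=> a).
by split; rewrite ?big_ord1 ?scale1r.
Qed.

Lemma conv_seg (S : set V) a b (l0 l1 : R) : S a -> S b -> 0 <= l0 -> 0 <= l1 ->
  l0 + l1 = 1 -> Defs.conv S (l0 *: a + l1 *: b).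
Proof.
move=> Sa Sb l0_ge0 l1_ge0 l01.
exists 2%N, (fun j : 'I_2 => if j == ord0 then l0 else l1),
  (fun j : 'I_2 => if j == ord0 then a else b).
by split; rewrite ?big_ord_recl ?big_ord0 /= ?addr0 // => j; case: ifP.
Qed.

Lemma conv_detour_eq (S : set V) a z b : S a -> S b ->
  detour a z b = eucl_norm (a - b) -> Defs.conv S z.
Proof.
move=> Sa Sb detour_eq.
have /eucl_normD_eq : eucl_norm ((a - z) + (z - b)) = detour a z b.
  by rewrite addrA subrK detour_eq.
have al_ge0 := eucl_norm_ge0 (a - z); have be_ge0 := eucl_norm_ge0 (z - b).
set al := eucl_norm (a - z); set be := eucl_norm (z - b) => collinear.
have [s0|s0] := eqVneq (al + be) 0.
  move/eqP: s0; rewrite paddr_eq0 // => /andP[/eqP/eucl_norm_eq0/eqP + _].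
  by rewrite subr_eq0 => /eqP <-; exact: conv_mem.
have s_gt0 : 0 < al + be by rewrite lt_neqAle eq_sym s0 addr_ge0.
have -> : z = (be / (al + be)) *: a + (al / (al + be)) *: b.
  apply/rowP => j; have := congr1 (fun M : V => M ord0 j) collinear.
  rewrite !mxE => ej; apply/eqP; rewrite -subr_eq0; apply/eqP.
  have -> : z ord0 j - (be / (al + be) * a ord0 j + al / (al + be) * b ord0 j)
     = - (be * (a ord0 j - z ord0 j) - al * (z ord0 j - b ord0 j)) / (al + be).
    by field; rewrite lt0r_neq0.
  by rewrite ej subrr oppr0 mul0r.
apply: conv_seg; rewrite ?divr_ge0 ?(ltW s_gt0) //.
by rewrite -mulrDl addrC divff // lt0r_neq0.
Qed.

End Segment.

Section CyclicPerimeter.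
Variables (R : realType) (n m : nat).
Hypothesis m_gt1 : (1 < m)%N.
Local Notation V := 'rV[R]_n.
Implicit Types (x : 'I_m -> V) (i : 'I_m).

Lemma ordS_neq i : ordS i != i.
Proof.
apply/eqP => /(congr1 val) /=; have := ltn_ord i.
case: (ltngtP i.+1 m) => [lt_im|//|eq_im]; last by rewrite eq_im modnn; lia.
by rewrite modn_small //; lia.
Qed.

Lemma ord_pred_neq i : ord_pred i != i.
Proof. by apply: contra_neq (ordS_neq i) => e; rewrite -{1}e ord_predK. Qed.

Lemma cycD_bigD1 x i : cycD x = detour (x (ord_pred i)) (x i) (x (ordS i))
  + \sum_(j | (j != i) && (j != ord_pred i)) eucl_norm (x j - x (ordS j)).
Proof.
rewrite /cycD (bigD1 i) //= (bigD1 (ord_pred i)) /=; last by rewrite ord_pred_neq.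
by rewrite ord_predK addrA [X in X + _]addrC.
Qed.

Lemma cycD_update x i (q : V) :
  cycD ([eta x with i |-> q]) + detour (x (ord_pred i)) (x i) (x (ordS i))
  = cycD x + detour (x (ord_pred i)) q (x (ordS i)).
Proof.
rewrite !(cycD_bigD1 _ i) /= eqxx (negbTE (ord_pred_neq i)) (negbTE (ordS_neq i)).
have -> : \sum_(j | (j != i) && (j != ord_pred i))
    eucl_norm ([eta x with i |-> q] j - [eta x with i |-> q] (ordS j))
  = \sum_(j | (j != i) && (j != ord_pred i)) eucl_norm (x j - x (ordS j)).
  apply: eq_bigr => j /andP[ji jpi] /=; rewrite (negbTE ji) ifN //.
  by apply: contra_neq jpi => <-; rewrite ordSK.
by rewrite addrC addrA [RHS]addrAC.
Qed.

End CyclicPerimeter.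

Section GeneralPosition.
Variables (R : realType) (n m : nat) (C : 'I_m -> set 'rV[R]_n).
Hypotheses (m_gt1 : (1 < m)%N) (C_closed : forall i, closed (C i))
  (C_gp : general_position C).
Local Notation V := 'rV[R]_n.
Local Notation others i := (\bigcup_(j in [set j | j != i]) C j).

Lemma conv_others_notin i (w : V) : C i w -> ~ Defs.conv (others i) w.
Proof.
by move=> Ciw conv_w; have : (C i `&` Defs.conv (others i)) w by []; rewrite C_gp.
Qed.

Lemma others_neighbours (x : 'I_m -> V) i : prodset C x ->
  others i (x (ord_pred i)) /\ others i (x (ordS i)).
Proof.
move=> Cx; split; [exists (ord_pred i) | exists (ordS i)] => //=.
  exact: ord_pred_neq.
exact: ordS_neq.
Qed.

Lemma exists_bd_update (x : 'I_m -> V) i : prodset C x ->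
  exists2 q, bd (C i) q & cycD [eta x with i |-> q] <= cycD x.
Proof.
move=> Cx; have [others_pred _] := others_neighbours i Cx.
have pred_notin : ~ C i (x (ord_pred i)).
  by move=> Ci_pred; apply: conv_others_notin Ci_pred _; exact: conv_mem.
have [t t01 bd_t] := towards_bd (@C_closed i) (Cx i) pred_notin.
exists (towards (x i) (x (ord_pred i)) t) => //.
have := cycD_update m_gt1 x i (towards (x i) (x (ord_pred i)) t).
by have := detour_towards_le (x (ord_pred i)) (x i) (x (ordS i)) t01; lra.
Qed.

Lemma exists_bd_le (x : 'I_m -> V) : prodset C x ->
  exists2 y, prodset (fun i => bd (C i)) y & cycD y <= cycD x.
Proof.
move=> Cx.
suff /(_ m (leqnn m)) [y [Cy Dy bd_y]] : forall k, (k <= m)%N ->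
    exists y, [/\ prodset C y, cycD y <= cycD x &
                  forall j : 'I_m, (j < k)%N -> bd (C j) (y j)].
  by exists y => // j; exact: bd_y.
elim=> [|k IHk] lt_km; first by exists x.
have [y [Cy Dy bd_y]] := IHk (ltnW lt_km).
have [q bd_q Dq] := exists_bd_update (Ordinal lt_km) Cy.
exists [eta y with Ordinal lt_km |-> q]; split.
- move=> j /=; case: ifP => [/eqP -> | _]; last exact: Cy.
  exact: closed_bd_sub (@C_closed _) _ bd_q.
- exact: le_trans Dq Dy.
- move=> j; rewrite ltnS leq_eqVlt => /orP[/eqP j_k | j_lt_k] /=.
    have -> : j = Ordinal lt_km by apply: val_inj.
    by rewrite eqxx.
  rewrite ifN; first exact: bd_y.
  by apply/eqP => /(congr1 val) /= j_k; rewrite j_k ltnn in j_lt_k.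
Qed.

Lemma minimizer_bd (xs : 'I_m -> V) : prodset C xs ->
  (forall y, prodset C y -> cycD xs <= cycD y) -> forall i, bd (C i) (xs i).
Proof.
move=> Cxs xs_min i; split; first exact: subset_closure.
move=> int_xi; have [others_a others_b] := others_neighbours i Cxs.
apply: conv_others_notin (interior_subset int_xi) _.
apply: (conv_detour_eq others_a others_b); apply/le_anti; rewrite detour_ge andbT.
set a := xs (ord_pred i); set z := xs i; set b := xs (ordS i).
have [t /andP[t_gt0 t_le1] Ci_t] := towards_interior a int_xi.
have t01 : 0 <= t <= 1 by rewrite ltW.
have C_update : prodset C [eta xs with i |-> towards z a t].
  by move=> j /=; case: ifP => [/eqP -> | _].
have := xs_min _ C_update; have := cycD_update m_gt1 xs i (towards z a t).
have := detour_towards_convex a z b t01 => convex_t update_eq min_le.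
have : t * detour a z b <= t * eucl_norm (a - b) by lra.
by rewrite ler_pM2l.
Qed.

End GeneralPosition.

Lemma inf_image_eq (T : Type) (R : realType) (f : T -> R) (P Q : set T) :
  Q `<=` P -> P !=set0 -> has_lbound (f @` P) ->
  (forall x, P x -> exists2 y, Q y & f y <= f x) ->
  inf (f @` P) = inf (f @` Q).
Proof.
move=> QP [x Px] lb_P dominated; have [y Qy _] := dominated x Px.
have fQP : f @` Q `<=` f @` P by exact: image_subset.
have lb_Q := subset_has_lbound fQP lb_P.
apply/le_anti/andP; split.
- apply: lb_le_inf; first by exists (f y), y.
  by move=> r /fQP; exact: ge_inf.
- apply: lb_le_inf; first by exists (f x), x.
  move=> _ [w Pw <-]; have [v Qv le_vw] := dominated w Pw.
  by apply: le_trans le_vw; apply: (ge_inf lb_Q); exists v.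
Qed.

Theorem mainTheorem3 (R : realType) (n m : nat) (C : 'I_m -> set 'rV[R]_n) :
  (3 <= m)%N ->
  (forall i, C i !=set0) ->
  (forall i, closed (C i)) ->
  (forall i, convex (C i)) ->
  general_position C ->
  inf [set cycD x | x in prodset C]
    = inf [set cycD x | x in prodset (fun i => bd (C i))] /\
  (forall xs : 'I_m -> 'rV[R]_n,
     prodset C xs ->
     (forall y, prodset C y -> cycD xs <= cycD y) ->
     forall i, bd (C i) (xs i)).
Proof.
move=> /ltnW m_gt1 C_neq0 C_closed _ C_gp.
split; last exact: minimizer_bd m_gt1 C_gp.
apply: inf_image_eq.
- by move=> x bd_x i; exact: closed_bd_sub (C_closed i) _ (bd_x i).
- by have [x Cx] := choice C_neq0; exists x.
- by exists 0 => _ [x _ <-]; apply: sumr_ge0 => i _; exact: eucl_norm_ge0.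
- exact: exists_bd_le m_gt1 C_closed C_gp.
Qed.
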